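(* Let $\alpha\ge0$, $\beta\ge0$, $\gamma<0$, $\omega^2=1$, $ca\ge0$, $N\ge2$, and $r>0$. Let $(x_j(t),y_j(t))_{j=1}^N$ be a solution of $$\dot{x}_i=y_i+\frac{ca}{N}\sum_{j=1}^N(x_j-x_i),\qquad \dot{y}_i=-(\alpha x_i^2+\beta y_i^2-\gamma)y_i-\omega^2x_i+\frac{ca}{N}\sum_{j=1}^N(y_j-y_i),$$ with $x_j(0)^2+y_j(0)^2\le r^2$ for all $j$. Consider the associated (time-dependent) virtual system on $\mathbb{R}^2$ $$\dot x=y+\frac{ca}{N}\Big(\sum_{j=1}^N x_j(t)-Nx\Big),\qquad \dot y=-(\alpha x^2+\beta y^2-\gamma)y-\omega^2x+\frac{ca}{N}\Big(\sum_{j=1}^N y_j(t)-Ny\Big).$$ Then for every $t\ge0$ and every $(x,y)$ with $x^2+y^2=r^2$, the vector field $(\dot x,\dot y)$ of the virtual system satisfies $x\dot x+y\dot y\le0$. Consequently the closed disk $\{x^2+y^2\le r^2\}$ is a trapping (forward invariant) region for the virtual system, and in particular $x_k(t)^2+y_k(t)^2\le r^2$ for all $k$ and all $t\ge0$. *)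

From Stdlib Require Import Reals.
Open Scope R_scope.

(* sumN N f = f 0 + f 1 + ... + f (N-1)  (the sum over j = 1..N of the paper,
   indices shifted to 0..N-1). *)
Fixpoint sumN (N : nat) (f : nat -> R) : R :=
  match N with
  | O => 0
  | S n => sumN n f + f n
  end.

(* Right-continuity at time 0 (solutions live on [0, +oo)). *)
Definition right_cont0 (u : R -> R) : Prop :=
  forall eps, 0 < eps -> exists delta, 0 < delta /\
    forall h, 0 <= h < delta -> Rabs (u h - u 0) < eps.

Definition solves2 (F G : R -> R -> R -> R) (u v : R -> R) : Prop :=
  (forall t, 0 < t ->
     derivable_pt_lim u t (F t (u t) (v t)) /\
     derivable_pt_lim v t (G t (u t) (v t))) /\
  right_cont0 u /\ right_cont0 v.

Definition network_solution (al be ga om ca : R) (N : nat)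
    (xs ys : nat -> R -> R) : Prop :=
  forall i, (i < N)%nat ->
    (forall t, 0 < t ->
       derivable_pt_lim (xs i) t
         (ys i t + ca / INR N * sumN N (fun j => xs j t - xs i t)) /\
       derivable_pt_lim (ys i) t
         (- (al * xs i t ^ 2 + be * ys i t ^ 2 - ga) * ys i t
          - om ^ 2 * xs i t
          + ca / INR N * sumN N (fun j => ys j t - ys i t))) /\
    right_cont0 (xs i) /\ right_cont0 (ys i).

Definition virt_F (ca : R) (N : nat) (xs : nat -> R -> R) (t x y : R) : R :=
  y + ca / INR N * (sumN N (fun j => xs j t) - INR N * x).

Definition virt_G (al be ga om ca : R) (N : nat) (ys : nat -> R -> R)
    (t x y : R) : R :=
  - (al * x ^ 2 + be * y ^ 2 - ga) * y - om ^ 2 * x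
  + ca / INR N * (sumN N (fun j => ys j t) - INR N * y).

From Stdlib Require Import Reals Lra Lia Psatz Classical.
Open Scope R_scope.

(* Write k = ca/N >= 0.  For a point (x, y) and driving points
   (p_j, q_j), the radial component x*xdot + y*ydot of the (virtual or network)
   vector field equals
     -(al x^2 + be y^2 - ga) y^2 + k * sum_j [x (p_j - x) + y (q_j - y)]
   because the rotation terms x*y - om^2*x*y cancel when om^2 = 1.  The damping
   term is <= 0, and each coupling term is <= 0 as soon as (p_j, q_j) is no
   farther from the origin than (x, y).  Hence the radial component is <= 0
   whenever (x, y) is a point of maximal norm among the driving points.

   The dynamical part is a maximum principle for finitely many functions f_i
   on [0, +oo): if f_i(0) <= C and f_i' <= 0 whenever f_i is the largest of
   the f_j and exceeds C, then every f_i stays <= C.  It is proved for the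
   perturbed functions f_i(t) - eps (1 + t) by a first-exit-time argument and
   then eps -> 0.  Applied to the squared norms |(x_i, y_i)|^2 of the network
   it confines every node to the disk of radius r; the boundary condition of
   the virtual system follows, and applying the principle once more (with a
   single function) confines every trajectory of the virtual system. *)

Lemma sumN_lin (N : nat) (f g : nat -> R) (a b : R) :
  a * sumN N f + b * sumN N g = sumN N (fun j => a * f j + b * g j).
Proof. induction N as [|N IH]; simpl; [ring|]. rewrite <- IH. ring. Qed.

Lemma sumN_nonpos (N : nat) (f : nat -> R) :
  (forall j, (j < N)%nat -> f j <= 0) -> sumN N f <= 0.
Proof.
  induction N as [|N IH]; simpl; intros Hf; [lra|].
  assert (sumN N f <= 0) by (apply IH; intros; apply Hf; lia).
  assert (f N <= 0) by (apply Hf; lia).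
  lra.
Qed.

Lemma sumN_sub_const (N : nat) (f : nat -> R) (c : R) :
  sumN N (fun j => f j - c) = sumN N f - INR N * c.
Proof.
  induction N as [|N IH]; cbn [sumN]; [simpl; ring|]. rewrite IH, S_INR. ring.
Qed.

Lemma uniform_delta (K : nat) (P : nat -> R -> Prop) :
  (forall i d d', 0 < d' <= d -> P i d -> P i d') ->
  (forall i, (i < K)%nat -> exists d, 0 < d /\ P i d) ->
  exists d, 0 < d /\ forall i, (i < K)%nat -> P i d.
Proof.
  intros Hmono. induction K as [|K IH]; intros Hex.
  - exists 1. split; [lra | intros; lia].
  - destruct IH as [d1 [Hd1 P1]]; [intros i Hi; apply Hex; lia|].
    destruct (Hex K) as [d2 [Hd2 P2]]; [lia|].
    assert (Hmin : 0 < Rmin d1 d2) by (apply Rmin_pos; assumption).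
    exists (Rmin d1 d2). split; [exact Hmin|].
    intros i Hi. destruct (Nat.eq_dec i K) as [->|Hne].
    + apply (Hmono K d2); [split; [exact Hmin | apply Rmin_r] | exact P2].
    + apply (Hmono i d1); [split; [exact Hmin | apply Rmin_l] | apply P1; lia].
Qed.

Lemma argmax (K : nat) (h : nat -> R) :
  (0 < K)%nat -> exists i, (i < K)%nat /\ forall j, (j < K)%nat -> h j <= h i.
Proof.
  induction K as [|K IH]; intros HK; [lia|].
  destruct (Nat.eq_dec K 0) as [->|HK0].
  - exists 0%nat. split; [lia|]. intros j Hj. replace j with 0%nat by lia. lra.
  - destruct IH as [i [Hi Hmax]]; [lia|].
    destruct (Rle_dec (h K) (h i)) as [Hle|Hgt].
    + exists i. split; [lia|]. intros j Hj.
      destruct (Nat.eq_dec j K) as [->|]; [exact Hle | apply Hmax; lia].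
    + exists K. split; [lia|]. intros j Hj.
      destruct (Nat.eq_dec j K) as [->|]; [lra|].
      specialize (Hmax j ltac:(lia)). lra.
Qed.

Lemma first_exit (P : R -> Prop) (t0 : R) :
  0 <= t0 -> ~ P t0 ->
  (exists d, 0 < d /\ forall u, 0 <= u < d -> P u) ->
  (forall T, 0 < T -> P T -> exists d, 0 < d /\ forall u, T <= u < T + d -> P u) ->
  exists T, 0 < T /\ (forall u, 0 <= u < T -> P u) /\ ~ P T.
Proof.
  intros Ht0 Hfail [d0 [Hd0 Hstart]] Hforward.
  set (E := fun s => 0 <= s /\ forall u, 0 <= u <= s -> P u).
  assert (Ebound : bound E).
  { exists t0. intros s [Hs HP]. apply Rnot_lt_le. intro.
    apply Hfail, HP. lra. }
  assert (Estart : E (d0 / 2)).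
  { split; [lra|]. intros u Hu. apply Hstart. lra. }
  destruct (completeness E Ebound (ex_intro _ _ Estart)) as [T [Hub Hlub]].
  assert (HT : 0 < T) by (apply Hub in Estart; lra).
  assert (Hbefore : forall u, 0 <= u < T -> P u).
  { intros u Hu. destruct (classic (P u)) as [|HnP]; [assumption|].
    assert (Hu_ub : is_upper_bound E u).
    { intros s [Hs HP]. apply Rnot_lt_le. intro. apply HnP, HP. lra. }
    apply Hlub in Hu_ub. lra. }
  exists T. split; [exact HT|]. split; [exact Hbefore|].
  intro HPT. destruct (Hforward T HT HPT) as [d [Hd Hnext]].
  assert (Hfurther : E (T + d / 2)).
  { split; [lra|]. intros u Hu. destruct (Rlt_le_dec u T).
    - apply Hbefore. lra.
    - apply Hnext. lra. }
  apply Hub in Hfurther. lra.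
Qed.

Lemma left_secant_bound (f : R -> R) (T l m : R) :
  derivable_pt_lim f T l -> l < m ->
  exists d, 0 < d /\ forall h, 0 < h < d -> f T - m * h < f (T - h).
Proof.
  intros Hf Hlm. destruct (Hf (m - l) ltac:(lra)) as [[d Hd] Hquot]. simpl in Hquot.
  exists d. split; [exact Hd|]. intros h Hh.
  assert (Hneg : - h <> 0) by lra.
  assert (Habs : Rabs (- h) < d) by (rewrite Rabs_left; lra).
  specialize (Hquot (- h) Hneg Habs). apply Rabs_def2 in Hquot.
  destruct Hquot as [Hq _].
  set (q := (f (T + - h) - f T) / - h) in Hq.
  assert (Hdiff : f (T - h) - f T = - h * q) by (unfold q, Rminus; field; lra).
  nra.
Qed.

Section MaxPrinciple.

Variables (K : nat) (C : R) (f f' : nat -> R -> R).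

Hypothesis f_deriv :
  forall i, (i < K)%nat -> forall t, 0 < t -> derivable_pt_lim (f i) t (f' i t).
Hypothesis f_right_cont0 : forall i, (i < K)%nat -> right_cont0 (f i).
Hypothesis f_init : forall i, (i < K)%nat -> f i 0 <= C.
Hypothesis f_dissipative :
  forall i t, (i < K)%nat -> 0 < t ->
    (forall j, (j < K)%nat -> f j t <= f i t) -> C < f i t -> f' i t <= 0.

Let tilted (eps : R) (i : nat) (t : R) : R := f i t - eps * (1 + t).
Let all_below (eps t : R) : Prop := forall i, (i < K)%nat -> tilted eps i t < C.

Lemma all_below_start (eps : R) :
  0 < eps -> exists d, 0 < d /\ forall u, 0 <= u < d -> all_below eps u.
Proof.
  intros Heps.
  destruct (uniform_delta K (fun i d => forall u, 0 <= u < d -> tilted eps i u < C))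
    as [d [Hd Hbelow]].
  - intros i d d' Hdd' Hi u Hu. apply Hi. lra.
  - intros i Hi. destruct (f_right_cont0 i Hi (eps / 2) ltac:(lra)) as [d [Hd Hclose]].
    exists d. split; [exact Hd|]. intros u Hu.
    specialize (Hclose u Hu). apply Rabs_def2 in Hclose.
    specialize (f_init i Hi). unfold tilted. nra.
  - exists d. split; [exact Hd|]. intros u Hu i Hi. apply Hbelow; assumption.
Qed.

Lemma all_below_forward (eps T : R) :
  0 < eps -> 0 < T -> all_below eps T ->
  exists d, 0 < d /\ forall u, T <= u < T + d -> all_below eps u.
Proof.
  intros Heps HT Hbelow.
  destruct (uniform_delta K (fun i d => forall u, T <= u < T + d -> tilted eps i u < C))
    as [d [Hd Hnear]].
  - intros i d d' Hdd' Hi u Hu. apply Hi. lra.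
  - intros i Hi.
    assert (Hcont : continuity_pt (f i) T).
    { apply derivable_continuous_pt. exists (f' i T). apply f_deriv; assumption. }
    set (gap := C - tilted eps i T).
    assert (Hgap : 0 < gap) by (unfold gap; specialize (Hbelow i Hi); lra).
    destruct (Hcont gap Hgap) as [d [Hd Hclose]]. simpl in Hclose.
    exists d. split; [exact Hd|]. intros u Hu.
    destruct (Req_dec u T) as [->|Hne]; [apply Hbelow; assumption|].
    assert (Hfu : R_dist (f i u) (f i T) < gap).
    { apply Hclose. split; [split; [exact I | congruence]|].
      unfold R_dist. rewrite Rabs_right; lra. }
    unfold R_dist in Hfu. apply Rabs_def2 in Hfu.
    unfold gap, tilted in *. nra.
  - exists d. split; [exact Hd|]. intros u Hu i Hi. apply Hnear; assumption.
Qed.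

(* The tilted functions cannot reach C for the first time at T: the largest
   of them would have derivative <= -eps at T, so it was already >= C just
   before T. *)
Lemma all_below_no_first_crossing (eps T : R) :
  0 < eps -> 0 < T -> (forall u, 0 <= u < T -> all_below eps u) -> all_below eps T.
Proof.
  intros Heps HT Hbefore i0 Hi0.
  destruct (argmax K (fun j => f j T) ltac:(lia)) as [i [Hi Hmax]]. simpl in Hmax.
  assert (Htop : tilted eps i0 T <= tilted eps i T)
    by (specialize (Hmax i0 Hi0); unfold tilted; lra).
  destruct (Rlt_le_dec (tilted eps i T) C) as [Hlt|Hreach]; [lra|].
  exfalso.
  assert (Hf' : f' i T <= 0).
  { apply f_dissipative; try assumption. unfold tilted in Hreach. nra. }
  destruct (left_secant_bound (f i) T (f' i T) eps (f_deriv i Hi T HT) ltac:(lra))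
    as [d [Hd Hsecant]].
  set (h := Rmin (d / 2) (T / 2)).
  assert (Hh : 0 < h) by (apply Rmin_pos; lra).
  assert (Hh_d : h <= d / 2) by apply Rmin_l.
  assert (Hh_T : h <= T / 2) by apply Rmin_r.
  specialize (Hsecant h ltac:(lra)).
  assert (Hearlier : tilted eps i (T - h) < C) by (apply (Hbefore (T - h)); [lra | exact Hi]).
  unfold tilted in *. nra.
Qed.

Lemma max_principle_tilted (eps : R) :
  0 < eps -> forall i t, (i < K)%nat -> 0 <= t -> f i t - eps * (1 + t) < C.
Proof.
  intros Heps i t Hi Ht. apply Rnot_le_lt. intro Hreach.
  destruct (first_exit (all_below eps) t Ht) as [T [HT [Hbefore HnotT]]].
  - intro Hall. specialize (Hall i Hi). unfold tilted in Hall. lra.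
  - apply all_below_start; assumption.
  - intros T HT. apply all_below_forward; assumption.
  - apply HnotT, all_below_no_first_crossing; assumption.
Qed.

Theorem max_principle : forall i t, (i < K)%nat -> 0 <= t -> f i t <= C.
Proof.
  intros i t Hi Ht. apply Rnot_lt_le. intro Hover.
  set (eps := (f i t - C) / (2 * (1 + t))).
  assert (Heps : 0 < eps) by (unfold eps; apply Rdiv_lt_0_compat; lra).
  assert (Hhalf : eps * (1 + t) = (f i t - C) / 2) by (unfold eps; field; lra).
  pose proof (max_principle_tilted eps Heps i t Hi Ht). lra.
Qed.

End MaxPrinciple.

Lemma norm_sq_deriv (u v : R -> R) (t du dv : R) :
  derivable_pt_lim u t du -> derivable_pt_lim v t dv ->
  derivable_pt_lim (fun s => u s ^ 2 + v s ^ 2) t (2 * (u t * du + v t * dv)).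
Proof.
  intros Hu Hv.
  apply (derivable_pt_lim_ext (u * u + v * v)%F).
  { intro s. unfold plus_fct, mult_fct. ring. }
  replace (2 * (u t * du + v t * dv)) with
    ((du * u t + u t * du) + (dv * v t + v t * dv)) by ring.
  apply derivable_pt_lim_plus; apply derivable_pt_lim_mult; assumption.
Qed.

Lemma right_cont0_limit (u : R -> R) :
  right_cont0 u -> limit1_in u (fun h => 0 <= h) (u 0) 0.
Proof.
  intros Hu eps Heps. destruct (Hu eps Heps) as [d [Hd Hclose]].
  exists d. split; [exact Hd|]. intros h [Hh Hdist]. simpl in *. unfold R_dist in *.
  rewrite Rminus_0_r, Rabs_right in Hdist by lra. apply Hclose. lra.
Qed.

Lemma norm_sq_right_cont0 (u v : R -> R) :
  right_cont0 u -> right_cont0 v -> right_cont0 (fun t => u t ^ 2 + v t ^ 2).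
Proof.
  intros Hu Hv. apply right_cont0_limit in Hu. apply right_cont0_limit in Hv.
  pose proof (limit_plus _ _ _ _ _ _ (limit_mul _ _ _ _ _ _ Hu Hu)
                (limit_mul _ _ _ _ _ _ Hv Hv)) as Hlim.
  intros eps Heps. destruct (Hlim eps Heps) as [d [Hd Hclose]].
  exists d. split; [exact Hd|]. intros h Hh.
  specialize (Hclose h). simpl in Hclose. unfold R_dist in Hclose.
  replace (u h ^ 2 + v h ^ 2 - (u 0 ^ 2 + v 0 ^ 2)) with
    (u h * u h + v h * v h - (u 0 * u 0 + v 0 * v 0)) by ring.
  apply Hclose. split; [lra|]. rewrite Rminus_0_r, Rabs_right; lra.
Qed.

Lemma radial_pull_nonpos (x y a b : R) :
  a ^ 2 + b ^ 2 <= x ^ 2 + y ^ 2 -> x * (a - x) + y * (b - y) <= 0.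
Proof.
  intro Hab. assert (0 <= (x - a) ^ 2 + (y - b) ^ 2)
    by (apply Rplus_le_le_0_compat; apply pow2_ge_0).
  nra.
Qed.

Lemma radial_field_nonpos (al be ga om k x y : R) (N : nat) (p q : nat -> R) :
  0 <= al -> 0 <= be -> ga <= 0 -> om ^ 2 = 1 -> 0 <= k ->
  (forall j, (j < N)%nat -> p j ^ 2 + q j ^ 2 <= x ^ 2 + y ^ 2) ->
  x * (y + k * sumN N (fun j => p j - x))
  + y * (- (al * x ^ 2 + be * y ^ 2 - ga) * y - om ^ 2 * x
         + k * sumN N (fun j => q j - y)) <= 0.
Proof.
  intros Hal Hbe Hga Hom Hk Hfar.
  assert (Hcoupling : sumN N (fun j => x * (p j - x) + y * (q j - y)) <= 0).
  { apply sumN_nonpos. intros j Hj. apply radial_pull_nonpos, Hfar, Hj. }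
  rewrite <- sumN_lin in Hcoupling.
  assert (Hdamping : 0 <= (al * x ^ 2 + be * y ^ 2 - ga) * y ^ 2).
  { apply Rmult_le_pos; [|apply pow2_ge_0].
    assert (0 <= al * x ^ 2) by (apply Rmult_le_pos; [|apply pow2_ge_0]; assumption).
    assert (0 <= be * y ^ 2) by (apply Rmult_le_pos; [|apply pow2_ge_0]; assumption).
    lra. }
  rewrite Hom. nra.
Qed.

Lemma coupling_gain_nonneg (ca : R) (N : nat) : 0 <= ca -> 0 <= ca / INR N.
Proof.
  intro Hca. destruct N as [|N].
  - simpl. unfold Rdiv. rewrite Rinv_0. lra.
  - apply Rmult_le_pos; [exact Hca|]. left. apply Rinv_0_lt_compat, lt_0_INR. lia.
Qed.

Lemma network_in_disk (al be ga om ca r : R) (N : nat) (xs ys : nat -> R -> R) :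
  0 <= al -> 0 <= be -> ga <= 0 -> om ^ 2 = 1 -> 0 <= ca ->
  network_solution al be ga om ca N xs ys ->
  (forall j, (j < N)%nat -> xs j 0 ^ 2 + ys j 0 ^ 2 <= r ^ 2) ->
  forall k t, (k < N)%nat -> 0 <= t -> xs k t ^ 2 + ys k t ^ 2 <= r ^ 2.
Proof.
  intros Hal Hbe Hga Hom Hca Hsol Hinit.
  apply (max_principle N (r ^ 2) (fun j t => xs j t ^ 2 + ys j t ^ 2)
    (fun j t => 2 * (xs j t * (ys j t + ca / INR N * sumN N (fun l => xs l t - xs j t))
      + ys j t * (- (al * xs j t ^ 2 + be * ys j t ^ 2 - ga) * ys j t
         - om ^ 2 * xs j t + ca / INR N * sumN N (fun l => ys l t - ys j t))))).
  - intros i Hi t Ht. destruct (proj1 (Hsol i Hi) t Ht) as [Hx Hy].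
    apply norm_sq_deriv; assumption.
  - intros i Hi. destruct (Hsol i Hi) as [_ [Hx Hy]].
    apply norm_sq_right_cont0; assumption.
  - exact Hinit.
  - intros i t Hi Ht Hmax _.
    pose proof (radial_field_nonpos al be ga om (ca / INR N) (xs i t) (ys i t) N
      (fun j => xs j t) (fun j => ys j t) Hal Hbe Hga Hom
      (coupling_gain_nonneg ca N Hca) Hmax) as Hradial.
    lra.
Qed.

Lemma virt_radial_nonpos (al be ga om ca : R) (N : nat) (xs ys : nat -> R -> R)
    (t x y : R) :
  0 <= al -> 0 <= be -> ga <= 0 -> om ^ 2 = 1 -> 0 <= ca ->
  (forall j, (j < N)%nat -> xs j t ^ 2 + ys j t ^ 2 <= x ^ 2 + y ^ 2) ->
  x * virt_F ca N xs t x y + y * virt_G al be ga om ca N ys t x y <= 0.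
Proof.
  intros Hal Hbe Hga Hom Hca Hfar. unfold virt_F, virt_G.
  rewrite <- !(sumN_sub_const N).
  exact (radial_field_nonpos al be ga om (ca / INR N) x y N
    (fun j => xs j t) (fun j => ys j t) Hal Hbe Hga Hom
    (coupling_gain_nonneg ca N Hca) Hfar).
Qed.

Lemma virtual_in_disk (al be ga om ca r : R) (N : nat) (xs ys : nat -> R -> R) :
  0 <= al -> 0 <= be -> ga <= 0 -> om ^ 2 = 1 -> 0 <= ca ->
  (forall k t, (k < N)%nat -> 0 <= t -> xs k t ^ 2 + ys k t ^ 2 <= r ^ 2) ->
  forall u v : R -> R,
    solves2 (virt_F ca N xs) (virt_G al be ga om ca N ys) u v ->
    u 0 ^ 2 + v 0 ^ 2 <= r ^ 2 ->
    forall t, 0 <= t -> u t ^ 2 + v t ^ 2 <= r ^ 2.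
Proof.
  intros Hal Hbe Hga Hom Hca Hnet u v [Hderiv [Hu Hv]] Hinit t Ht.
  refine (max_principle 1 (r ^ 2) (fun _ s => u s ^ 2 + v s ^ 2)
    (fun _ s => 2 * (u s * virt_F ca N xs s (u s) (v s)
                     + v s * virt_G al be ga om ca N ys s (u s) (v s)))
    _ _ _ _ 0%nat t ltac:(lia) Ht).
  - intros _ _ s Hs. destruct (Hderiv s Hs). apply norm_sq_deriv; assumption.
  - intros. apply norm_sq_right_cont0; assumption.
  - intros. exact Hinit.
  - intros _ s _ Hs _ Hout.
    assert (Hfar : forall j, (j < N)%nat ->
              xs j s ^ 2 + ys j s ^ 2 <= u s ^ 2 + v s ^ 2)
      by (intros j Hj; specialize (Hnet j s Hj ltac:(lra)); lra).
    pose proof (virt_radial_nonpos al be ga om ca N xs ys s (u s) (v s)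
      Hal Hbe Hga Hom Hca Hfar).
    lra.
Qed.

Theorem lemma4p6 (al be ga om c a r : R) (N : nat) (xs ys : nat -> R -> R) :
  0 <= al -> 0 <= be -> ga < 0 -> om ^ 2 = 1 -> 0 <= c * a ->
  (2 <= N)%nat -> 0 < r ->
  network_solution al be ga om (c * a) N xs ys ->
  (forall j, (j < N)%nat -> xs j 0 ^ 2 + ys j 0 ^ 2 <= r ^ 2) ->
  (forall t x y, 0 <= t -> x ^ 2 + y ^ 2 = r ^ 2 ->
     x * virt_F (c * a) N xs t x y
     + y * virt_G al be ga om (c * a) N ys t x y <= 0)
  /\
  (forall u v : R -> R,
     solves2 (virt_F (c * a) N xs) (virt_G al be ga om (c * a) N ys) u v ->
     u 0 ^ 2 + v 0 ^ 2 <= r ^ 2 ->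
     forall t, 0 <= t -> u t ^ 2 + v t ^ 2 <= r ^ 2)
  /\
  (forall k t, (k < N)%nat -> 0 <= t -> xs k t ^ 2 + ys k t ^ 2 <= r ^ 2).
Proof.
  intros Hal Hbe Hga Hom Hca _ _ Hsol Hinit.
  assert (Hga' : ga <= 0) by lra.
  pose proof (network_in_disk al be ga om (c * a) r N xs ys
                Hal Hbe Hga' Hom Hca Hsol Hinit) as Hnet.
  split; [|split].
  - intros t x y Ht Hcircle. apply virt_radial_nonpos; try assumption.
    intros j Hj. rewrite Hcircle. apply Hnet; assumption.
  - apply virtual_in_disk; assumption.
  - exact Hnet.
Qed.
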